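(* Let $G$ be a finite abelian group and $S\subseteq G$ an interval of $G$. Then $\mathrm{sh}_G(S)\le 2$.
   Context: Shape parameter: for a finite abelian group $G$ (written multiplicatively), $G^\vee=\mathrm{Hom}(G,\mathbb C^* )$ with trivial character $\chi_0$. For $f=\sum_{g\in G}c_g g\in\mathbb C[G]$ and $\chi\in G^\vee$ put $f_\chi=\sum_g c_g\chi(g^{-1})$. For $S\subseteq G$ let $\mathbb C[S]=\{\sum_{s\in S}c_ss\}\subseteq\mathbb C[G]$. The shape parameter is $\mathrm{sh}_G(S)=\frac{\#S}{\#G}\inf\left\{\frac{\sum_{\chi\in G^\vee}|f_\chi|}{|f_{\chi_0}|}: f\in\mathbb C[S],\ f_{\chi_0}\neq0\right\}$. Intervals: an interval of $\mathbb Z$ is a nonempty set $[n,m]\cap\mathbb Z$ with $n,m\in\mathbb R$. A standard interval of $\mathbb Z/n\mathbb Z$ is the image of an interval of $\mathbb Z$. In a finite abelian group $G$, a full interval is a set $\pi^{-1}(T)$ where $\pi:G\to\mathbb Z/n\mathbb Z$ is a surjective homomorphism ($n\ge1$) and $T$ a standard interval of $\mathbb Z/n\mathbb Z$; an interval of $G$ is a full interval of some subgroup of $G$. *)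

From HB Require Import structures.
From mathcomp Require Import all_boot all_order all_algebra all_fingroup all_solvable all_field all_character.
Set Implicit Arguments. Unset Strict Implicit. Unset Printing Implicit Defensive.
Import Order.TTheory GRing.Theory Num.Theory.

Local Open Scope ring_scope.

(* f = \sum_g c g * g is represented by its coefficient function c : gT -> algC.
   f_chi := \sum_(g in G) c g * chi (g^-1). *)
Definition fcoef (gT : finGroupType) (G : {group gT}) (c : gT -> algC)
    (chi : 'CF(G)) : algC :=
  \sum_(g in G) c g * chi (g^-1)%g.

Definition supported_in (gT : finGroupType) (S : {set gT}) (c : gT -> algC) : Prop :=
  forall g, g \notin S -> c g = 0.

(* The quantity (#S/#G) * (sum_{chi in G^vee} |f_chi|) / |f_chi0|, where
   G^vee = Hom(G, C^* ) is realised as the linear irreducible characters of G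
   and chi0 = 1 is the trivial character. *)
Definition shape_ratio (gT : finGroupType) (G : {group gT}) (S : {set gT})
    (c : gT -> algC) : algC :=
  (#|S|%:R / #|G|%:R) *
  (\sum_(i : Iirr G | 'chi[G]_i \is a linear_char) `|fcoef c 'chi[G]_i|) /
  `|fcoef c (1 : 'CF(G))|.

Definition in_std_interval (n : nat) (a b : int) (x : 'I_n.+1) : Prop :=
  exists k : int, (a <= k <= b) /\ (Posz (val x) = (k %% (n.+1)%:Z)%Z).

Definition full_interval (gT : finGroupType) (H : {group gT}) (S : {set gT}) : Prop :=
  exists (n : nat) (pi : gT -> 'I_n.+1) (a b : int),
    [/\ a <= b,
        {in H &, forall x y, pi (x * y)%g = pi x + pi y},
        (forall k : 'I_n.+1, exists2 x, x \in H & pi x = k) &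
        (forall x, x \in S <-> (x \in H /\ in_std_interval a b (pi x)))].

Definition is_interval (gT : finGroupType) (G : {group gT}) (S : {set gT}) : Prop :=
  exists2 H : {group gT}, H \subset G & full_interval H S.

From HB Require Import structures.
From mathcomp Require Import all_boot all_order all_algebra all_fingroup all_solvable all_field all_character.
From mathcomp Require Import zify ring.
Set Implicit Arguments. Unset Strict Implicit. Unset Printing Implicit Defensive.
Import Order.TTheory GRing.Theory Num.Theory.
Local Open Scope ring_scope.

(* Write S = pi^-1([a, b]) for pi : H ->> Z/N and put A = pi^-1([0, m)) with
   m = ceil((b - a + 1) / 2). For g0 with pi g0 = a, the translated sumset
   g0 A A lies in S, while S is covered by the two cosets g0 A and g1 A with
   pi g1 = a + m, so #|S| <= 2 #|A|. The test function f = g0 (sum_(x in A) x)^2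
   has f_chi = chi(g0^-1) (sum_(x in A) chi(x^-1))^2 for every linear chi, so by
   Parseval sum_chi |f_chi| = #|G| #|A| while f_chi0 = #|A|^2: its shape ratio
   is exactly #|S| / #|A| <= 2. *)

Section AbelianCharacters.

Variables (gT : finGroupType) (G : {group gT}).
Hypothesis cGG : abelian G.

Lemma abelian_second_orthogonality x y : x \in G -> y \in G ->
  \sum_i 'chi[G]_i x * ('chi[G]_i y)^* = (#|G| * (x == y))%:R.
Proof.
move=> Gx Gy; rewrite second_orthogonality_relation //.
rewrite (abelian_classP _ cGG y Gy) inE.
have -> : 'C_G[x]%g = G.
  by apply/setIidPl/subsetP=> g Gg; apply/cent1P; apply: (centsP cGG).
by case: eqP; rewrite ?muln0 ?muln1.
Qed.

Lemma abelian_irr_parseval (A : {set gT}) : A \subset G ->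
  \sum_i `|\sum_(x in A) 'chi[G]_i (x^-1)%g| ^+ 2 = (#|G| * #|A|)%:R.
Proof.
move=> sAG; have GA x : x \in A -> (x^-1)%g \in G by move/(subsetP sAG); rewrite groupV.
under eq_bigr => i _ do rewrite normCK rmorph_sum mulr_suml.
rewrite exchange_big natrM mulrC mulr_natl -sumr_const /=.
apply: eq_bigr => x Ax; under eq_bigr => i _ do rewrite mulr_sumr.
rewrite exchange_big /= (bigD1 x) //= abelian_second_orthogonality ?GA // eqxx muln1.
rewrite big1 ?addr0 // => y /andP[Ay yx].
by rewrite abelian_second_orthogonality ?GA // (inj_eq invg_inj) eq_sym (negbTE yx) muln0.
Qed.

End AbelianCharacters.

(* The coefficient function of g0 * (sum_(x in A) x)^2 in the group algebra. *)
Definition shifted_square_coef (gT : finGroupType) (A : {set gT}) (g0 g : gT) : algC :=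
  \sum_(x in A) \sum_(y in A) (g == g0 * x * y)%g%:R.

Section ShiftedSquare.

Variables (gT : finGroupType) (G : {group gT}) (A : {set gT}) (g0 : gT).
Hypotheses (sAG : A \subset G) (Gg0 : g0 \in G).

Let c := shifted_square_coef A g0.

Lemma fcoef_shifted_square (chi : 'CF(G)) :
  fcoef c chi = \sum_(x in A) \sum_(y in A) chi ((g0 * x * y)^-1)%g.
Proof.
rewrite /fcoef /c /shifted_square_coef.
under eq_bigr => g _ do rewrite mulr_suml.
rewrite exchange_big; apply: eq_bigr => x Ax.
under eq_bigr => g _ do rewrite mulr_suml.
rewrite exchange_big; apply: eq_bigr => y Ay.
have Gg0xy : (g0 * x * y)%g \in G by rewrite !groupM // (subsetP sAG).
rewrite (bigD1 _ Gg0xy) /= eqxx mul1r big1 ?addr0 // => g /andP[_ /negbTE->].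
by rewrite mul0r.
Qed.

Lemma fcoef1_shifted_square : fcoef c (1 : 'CF(G)) = (#|A| ^ 2)%:R.
Proof.
rewrite fcoef_shifted_square (eq_bigr (fun=> #|A|%:R)) => [|x Ax].
  by rewrite sumr_const -[LHS]mulr_natr -natrM mulnn.
rewrite (eq_bigr (fun=> 1)) => [|y Ay]; first by rewrite sumr_const.
by rewrite cfun1E groupV !groupM // (subsetP sAG).
Qed.

Lemma norm_fcoef_shifted_square (chi : 'CF(G)) : chi \is a linear_char ->
  `|fcoef c chi| = `|\sum_(x in A) chi (x^-1)%g| ^+ 2.
Proof.
move=> lin_chi; suff -> : fcoef c chi = chi (g0^-1)%g * (\sum_(x in A) chi (x^-1)%g) ^+ 2.
  by rewrite normrM normC_lin_char ?groupV // mul1r normrX.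
rewrite fcoef_shifted_square expr2 mulr_suml mulr_sumr; apply: eq_bigr => x Ax.
rewrite !mulr_sumr; apply: eq_bigr => y Ay.
have [Gx Gy] := (subsetP sAG x Ax, subsetP sAG y Ay).
by rewrite !invMg !lin_charM ?groupM ?groupV //; ring.
Qed.

Lemma shape_ratio_shifted_square (S : {set gT}) : abelian G -> A != set0 ->
  shape_ratio G S c = #|S|%:R / #|A|%:R.
Proof.
move=> cGG A0; have lin i : 'chi[G]_i \is a linear_char by move/char_abelianP: cGG.
rewrite /shape_ratio fcoef1_shifted_square normr_nat (eq_bigl predT) //.
under eq_bigr => i _ do rewrite norm_fcoef_shifted_square //.
rewrite abelian_irr_parseval // natrM natrX.
have G0 : (#|G|%:R : algC) != 0 by rewrite pnatr_eq0 -lt0n cardG_gt0.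
have A0' : (#|A|%:R : algC) != 0 by rewrite pnatr_eq0 -lt0n card_gt0.
by field; rewrite G0 A0'.
Qed.

End ShiftedSquare.

Lemma shape_ratio_le2_of_sumset (gT : finGroupType) (G : {group gT}) (S A : {set gT}) g0 :
  abelian G -> A \subset G -> g0 \in G -> A != set0 ->
  {in A &, forall x y, (g0 * x * y)%g \in S} -> (#|S| <= 2 * #|A|)%N ->
  exists c : gT -> algC,
    [/\ supported_in S c, fcoef c (1 : 'CF(G)) != 0 & shape_ratio G S c <= 2].
Proof.
move=> cGG sAG Gg0 A0 sumAS cardS; exists (shifted_square_coef A g0); split.
- move=> g Sg; rewrite /shifted_square_coef big1 // => x Ax; rewrite big1 // => y Ay.
  by case: eqP => // eg; case/negP: Sg; rewrite eg sumAS.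
- by rewrite fcoef1_shifted_square // pnatr_eq0 -lt0n expn_gt0 card_gt0 A0.
rewrite shape_ratio_shifted_square // ler_pdivrMr ?ltr0n ?card_gt0 //.
by rewrite -natrM ler_nat.
Qed.

Lemma modz_two_windows (N m t : int) : 0 < N -> 0 <= t < 2 * m ->
  (t %% N < m)%Z \/ ((t - m) %% N < m)%Z.
Proof.
move=> N_gt0 /andP[t_ge0 t_lt]; set r := (t %% N)%Z.
have r_ge0 : 0 <= r by rewrite modz_ge0 // gt_eqF.
have r_ltN : r < N by rewrite ltz_pmod.
have r_le : r <= t.
  have q_ge0 : 0 <= (t %/ N)%Z by rewrite divz_ge0.
  by rewrite [leRHS](divz_eq t N) lerDr mulr_ge0 // ltW.
have [r_lt|r_ge] := ltP r m; [by left | right].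
rewrite -modzDml -/r modz_small; first lia.
by apply/andP; split; lia.
Qed.

Lemma val_ordD n (p q : 'I_n.+1) :
  (val (p + q))%:Z = (((val p)%:Z + (val q)%:Z) %% (n.+1)%:Z)%Z.
Proof.
change (val (p + q)) with ((val p + val q) %% n.+1)%N.
by rewrite -modz_nat PoszD.
Qed.

Lemma val_ordN n (p : 'I_n.+1) :
  (val (- p))%:Z = ((- (val p)%:Z) %% (n.+1)%:Z)%Z.
Proof.
change (val (- p)) with ((n.+1 - val p) %% n.+1)%N.
rewrite -modz_nat -subzn ?modzDl //; exact: ltnW (ltn_ord p).
Qed.

Section HomToCyclic.

Variables (gT : finGroupType) (H : {group gT}) (n : nat) (pi : gT -> 'I_n.+1).
Hypothesis pi_morph : {in H &, forall x y, pi (x * y)%g = pi x + pi y}.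

Local Notation N := (n.+1)%:Z.
Local Notation rep x := (val (pi x))%:Z.

Lemma rep_mul x y : x \in H -> y \in H -> rep (x * y)%g = ((rep x + rep y) %% N)%Z.
Proof. by move=> Hx Hy; rewrite pi_morph // val_ordD. Qed.

Lemma pi_1 : pi 1%g = 0.
Proof. by apply: (addrI (pi 1%g)); rewrite -pi_morph ?mulg1 ?addr0. Qed.

Lemma rep_invl x y : x \in H -> y \in H -> rep (x^-1 * y)%g = ((rep y - rep x) %% N)%Z.
Proof.
move=> Hx Hy; have piV : pi (x^-1)%g = - pi x.
  by apply/eqP; rewrite -addr_eq0 -pi_morph ?groupV // mulVg pi_1.
by rewrite pi_morph ?groupV // piV val_ordD val_ordN modzDml addrC.
Qed.

Lemma rep_surj : (forall k : 'I_n.+1, exists2 x, x \in H & pi x = k) ->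
  forall z : int, exists2 g, g \in H & rep g = (z %% N)%Z.
Proof.
move=> surj z; have z_ge0 : 0 <= (z %% N)%Z by rewrite modz_ge0.
have z_lt : (z %% N)%Z < N by rewrite ltz_pmod.
have [g Hg pig] := surj (inord `|(z %% N)%Z|%N).
exists g => //; rewrite pig /= inordK ?gez0_abs // -ltz_nat gez0_abs //.
Qed.

Variables (a b : int) (m : nat) (g0 : gT).
Hypotheses (Hg0 : g0 \in H) (rep_g0 : rep g0 = (a %% N)%Z).

Let A := [set x in H | (val (pi x) < m)%N].

Lemma sumset_in_interval x y : 2 * m%:Z <= b - a + 2 ->
  x \in A -> y \in A -> in_std_interval a b (pi (g0 * x * y)%g).
Proof.
move=> hm; rewrite !inE => /andP[Hx xm] /andP[Hy ym].
exists (a + rep x + rep y); split; first by move: xm ym; rewrite -!ltz_nat; lia.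
by rewrite !rep_mul ?groupM // rep_g0 modzDml -addrA modzDml addrA.
Qed.

Lemma interval_in_two_cosets g1 x : b - a + 1 <= 2 * m%:Z ->
  g1 \in H -> rep g1 = ((a + m%:Z) %% N)%Z ->
  x \in H -> in_std_interval a b (pi x) -> x \in (g0 *: A :|: g1 *: A)%g.
Proof.
move=> hm Hg1 rep_g1 Hx [k [/andP[ak kb] rep_x]].
have rep_shift g z : g \in H -> rep g = (z %% N)%Z ->
    rep (g^-1 * x)%g = ((k - z) %% N)%Z.
  by move=> Hg rep_g; rewrite rep_invl // rep_x rep_g modzDml -modzDmr modzNm modzDmr.
rewrite inE !mem_lcoset !inE !groupM ?groupV //= -!ltz_nat.
rewrite (rep_shift g0 a) ?(rep_shift g1 (a + m%:Z)) //.
have t_range : 0 <= k - a < 2 * m%:Z by apply/andP; split; lia.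
case: (modz_two_windows (isT : 0 < N) t_range) => [-> // | ].
by rewrite opprD addrA => ->; rewrite orbT.
Qed.

End HomToCyclic.

Lemma interval_sumset_cover (gT : finGroupType) (H : {group gT}) (S : {set gT}) :
  full_interval H S -> exists A : {set gT}, exists2 g0 : gT,
    [/\ A \subset H, g0 \in H & A != set0] &
    {in A &, forall x y, (g0 * x * y)%g \in S} /\ (#|S| <= 2 * #|A|)%N.
Proof.
move=> [n [pi [a [b [ab pi_morph surj memS]]]]].
pose m := (absz (b - a + 2)%R %/ 2)%N.
have m_gt0 : (0 < m)%N by rewrite /m; lia.
have m_lo : b - a + 1 <= 2 * m%:Z by rewrite /m; lia.
have m_hi : 2 * m%:Z <= b - a + 2 by rewrite /m; lia.
have [g0 Hg0 rep_g0] := rep_surj surj a.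
have [g1 Hg1 rep_g1] := rep_surj surj (a + m%:Z).
set A := [set x in H | (val (pi x) < m)%N].
have sAH : A \subset H by apply/subsetP=> x; rewrite inE => /andP[].
exists A, g0.
  by split=> //; apply/set0Pn; exists 1%g; rewrite inE group1 (pi_1 pi_morph).
split.
  move=> x y Ax Ay; apply/memS; split; first by rewrite !groupM // (subsetP sAH).
  exact: (sumset_in_interval pi_morph Hg0 rep_g0 m_hi).
have cover : S \subset (g0 *: A :|: g1 *: A)%g.
  apply/subsetP=> x /memS[Hx Tx].
  exact: (interval_in_two_cosets pi_morph Hg0 rep_g0 m_lo Hg1 rep_g1 Hx Tx).
by rewrite (leq_trans (subset_leq_card cover)) // cardsU !card_lcoset mul2n -addnn leq_subr.
Qed.

Theorem lemma3p5 (gT : finGroupType) (G : {group gT}) (S : {set gT}) :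
  abelian G -> is_interval G S ->
  forall eps : algC, 0 < eps ->
  exists c : gT -> algC,
    [/\ supported_in S c, fcoef c (1 : 'CF(G)) != 0 & shape_ratio G S c <= 2 + eps].
Proof.
move=> cGG [H sHG intSH] eps eps_gt0.
have [A [g0 [sAH Hg0 A0] [sumAS cardS]]] := interval_sumset_cover intSH.
have [c [Sc c1 ratio]] :=
  shape_ratio_le2_of_sumset cGG (subset_trans sAH sHG) (subsetP sHG _ Hg0) A0 sumAS cardS.
exists c; split=> //; apply: le_trans ratio _.
by rewrite lerDl ltW.
Qed.
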